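(* Let $f,g\in Sym$ be symmetric functions of degree at most a positive integer $n$. If $f[\Xi_\mu]=g[\Xi_\mu]$ for all partitions $\mu$ with $|\mu|\le n$, then $f=g$ in $Sym$.
   Context: $Sym=\mathbb{Q}[p_1,p_2,\ldots]$ graded by $\deg p_k=k$. For $f\in Sym$ and a partition $\mu$, $f[\Xi_\mu]$ denotes $f$ evaluated at the multiset of eigenvalues of a permutation matrix of cycle type $\mu$, i.e. $p_k\mapsto\sum_i\sum_{j=0}^{\mu_i-1}e^{2\pi i jk/\mu_i}=\sum_{d\mid k}d\,m_d(\mu)$, with $m_d(\mu)$ the number of parts of $\mu$ equal to $d$ (for $\mu$ the empty partition all $p_k\mapsto0$). *)

From HB Require Import structures.
From mathcomp Require Import all_boot all_order all_algebra.
From mathcomp Require Export mpoly.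
From mathcomp Require Export all_boot all_order all_algebra.
Set Implicit Arguments. Unset Strict Implicit. Unset Printing Implicit Defensive.
Import GRing.Theory.
Local Open Scope ring_scope.

(* An element of Sym = Q[p_1,p_2,...] involves only finitely many p_k, so it is
   an element of {mpoly rat[N]} for some N, where the variable 'X_i (i : 'I_N)
   stands for p_(i+1).  The inclusions {mpoly rat[N]} -> {mpoly rat[N']} are
   injective, so equality in Sym is equality in any such ring. *)

Definition wdeg (N : nat) (m : 'X_{1..N}) : nat := (\sum_(i < N) (i.+1 * m i))%N.

Definition sym_deg_le (N n : nat) (f : {mpoly rat[N]}) : Prop :=
  forall m : 'X_{1..N}, m \in msupp f -> (wdeg m <= n)%N.

(* partitions: finite lists of positive parts; |mu| = sumn mu *)
Definition is_partition (mu : seq nat) : bool := all (fun x => 0 < x)%N mu.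

Definition p_at_Xi (mu : seq nat) (k : nat) : rat :=
  (\sum_(d <- divisors k) d * count_mem d mu)%N%:R.

Definition eval_Xi (N : nat) (f : {mpoly rat[N]}) (mu : seq nat) : rat :=
  f.@[fun i : 'I_N => p_at_Xi mu i.+1].

From mathcomp Require Import zify.
Set Implicit Arguments. Unset Strict Implicit. Unset Printing Implicit Defensive.
Import GRing.Theory Num.Theory.
Local Open Scope ring_scope.

(* At Xi_mu the power sum p_k takes the value sum_(d | k) d m_d(mu), so adding
   t parts equal to k to mu shifts p_k by t k and leaves p_1, ..., p_(k-1)
   unchanged.  Induct on the largest k such that p_k occurs in h = f - g, and
   expand h = sum_j h_j p_k^j with h_j free of p_k, ... .  Descending in j:
   once h_j' = 0 for all j' > j, for each mu with parts < k and
   |mu| <= n - j k the polynomial sum_(j' <= j) h_j'[Xi_mu] y^j' vanishes at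
   the j + 1 points y = p_k[Xi_mu] + t k, t = 0, ..., j, as mu + (k^t) still
   has size <= n.  So h_j[Xi_mu] = 0, and since h_j has degree <= n - j k the
   induction hypothesis gives h_j = 0. *)

Section TermSums.
Variables (R : comNzRingType) (N : nat).
Implicit Types (k : 'I_N) (m : 'X_{1..N}) (s : seq 'X_{1..N}) (c : 'X_{1..N} -> R) (x y : 'I_N -> R).

Definition term_sum s c x : R := \sum_(m <- s) c m * mmap1 x m.

Definition mnm_clear (k : 'I_N) (m : 'X_{1..N}) : 'X_{1..N} :=
  [multinom (if i == k then 0%N else m i) | i < N].

Definition slice (k : 'I_N) s (J : nat) : seq 'X_{1..N} :=
  [seq mnm_clear k m | m : 'X_{1..N} <- s & m k == J].

Definition slice_coef (k : 'I_N) c (J : nat) (m : 'X_{1..N}) : R :=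
  c (m + U_(k) *+ J)%MM.

Lemma mnm_clearK k m : (mnm_clear k m + U_(k) *+ m k)%MM = m.
Proof.
apply/mnmP => i; rewrite mnmDE mulmnE mnm1E !mnmE eq_sym.
by case: eqP => [->|]; rewrite ?mul1n ?add0n ?mul0n ?addn0.
Qed.

Lemma mmap1_clear k x m : mmap1 x m = mmap1 x (mnm_clear k m) * x k ^+ m k.
Proof.
rewrite /mmap1 (bigD1 k) // [X in _ = X * _](bigD1 k) //= mnmE eqxx expr0.
rewrite mul1r mulrC; congr (_ * _); apply: eq_bigr => i /negbTE ik.
by rewrite mnmE ik.
Qed.

Lemma wdeg_clear k m : wdeg m = (wdeg (mnm_clear k m) + k.+1 * m k)%N.
Proof.
rewrite /wdeg (bigD1 k) // [X in _ = (X + _)%N](bigD1 k) //= mnmE eqxx.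
rewrite muln0 add0n addnC; congr (_ + _)%N; apply: eq_bigr => i /negbTE ik.
by rewrite mnmE ik.
Qed.

Lemma term_sum_slice k s c J x :
  term_sum (slice k s J) (slice_coef k c J) x =
  \sum_(m <- s | m k == J) c m * mmap1 x (mnm_clear k m).
Proof.
rewrite /term_sum big_map big_filter; apply: eq_bigr => m /eqP mk.
by rewrite /slice_coef -mk mnm_clearK.
Qed.

Lemma term_sum_slices k n s c x : {in s, forall m, m k <= n}%N ->
  term_sum s c x =
  \sum_(j < n.+1) term_sum (slice k s j) (slice_coef k c j) x * x k ^+ j.
Proof.
move=> s_le; under [RHS]eq_bigr do rewrite term_sum_slice mulr_suml.
rewrite (exchange_big_dep xpredT) //= /term_sum big_seq [RHS]big_seq.
apply: eq_bigr => m ms; have mk : (m k < n.+1)%N by rewrite ltnS s_le.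
rewrite (big_pred1 (Ordinal mk)); last by move=> j; rewrite /= eq_sym.
by rewrite -mulrA -mmap1_clear.
Qed.

Lemma slice_vars k s J :
  {in s, forall m, forall i : 'I_N, k < i -> m i = 0%N}%N ->
  {in slice k s J, forall m, forall i : 'I_N, k <= i -> m i = 0%N}%N.
Proof.
move=> s_vars _ /mapP[m /[!mem_filter] /andP[_ ms] ->] i ki.
rewrite mnmE; case: eqP => // /eqP ik; apply: s_vars => //.
by rewrite ltn_neqAle ki andbT eq_sym.
Qed.

Lemma term_sum_eq_low K s c x y :
  {in s, forall m, forall i : 'I_N, K <= i -> m i = 0%N}%N ->
  (forall i : 'I_N, (i < K)%N -> x i = y i) ->
  term_sum s c x = term_sum s c y.
Proof.
move=> s_vars xy; apply: eq_big_seq => m ms; congr (_ * _).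
apply: eq_bigr => i _; case: (ltnP i K) => [/xy -> // | Ki].
by rewrite s_vars.
Qed.

End TermSums.

Lemma coef_eq0_of_progression (R : numFieldType) (a : nat -> R) (x d : R) J :
  d != 0 ->
  (forall t, (t <= J)%N -> \sum_(j < J.+1) a j * (x + t%:R * d) ^+ j = 0) ->
  forall j, (j <= J)%N -> a j = 0.
Proof.
move=> d_neq0 roots.
pose Q := \poly_(j < J.+1) a j.
pose rs := [seq x + t%:R * d | t <- iota 0 J.+1].
have rs_roots : all (root Q) rs.
  apply/allP => _ /mapP[t /[!mem_iota] /andP[_ tJ] ->].
  by rewrite /root horner_poly roots.
have rs_uniq : uniq rs.
  rewrite map_inj_uniq ?iota_uniq // => t1 t2 /addrI /(mulIf d_neq0) /eqP.
  by rewrite eqr_nat => /eqP.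
have Q0 : Q = 0.
  by apply: roots_geq_poly_eq0 rs_roots rs_uniq _; rewrite size_map size_iota size_poly.
move=> j jJ; have := congr1 (fun q : {poly R} => q`_j) Q0.
by rewrite /= coef_poly ltnS jJ coef0.
Qed.

Definition Xi_point N (mu : seq nat) : 'I_N -> rat := fun i => p_at_Xi mu i.+1.

Lemma p_at_Xi_cat_nseq_small t K mu i : (0 < i <= K)%N ->
  p_at_Xi (nseq t K.+1 ++ mu) i = p_at_Xi mu i.
Proof.
move=> /andP[i_gt0 iK]; rewrite /p_at_Xi; congr (_%:R).
apply: eq_big_seq => d; rewrite -dvdn_divisors // => /dvdn_leq di.
rewrite count_cat count_nseq /=.
by have -> : (K.+1 == d) = false by apply/eqP; lia.
Qed.

Lemma p_at_Xi_cat_nseq t K mu :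
  p_at_Xi (nseq t K.+1 ++ mu) K.+1 = p_at_Xi mu K.+1 + (t * K.+1)%:R.
Proof.
rewrite /p_at_Xi -natrD; congr (_%:R).
under eq_bigr do rewrite count_cat count_nseq mulnDr.
rewrite big_split addnC; congr addn.
rewrite (bigD1_seq K.+1) ?divisors_uniq -?dvdn_divisors //= eqxx mul1n.
rewrite big1_seq ?addn0 1?mulnC // => d /andP[dK _].
by rewrite eq_sym (negbTE dK) mul0n muln0.
Qed.

Definition parts_le (K : nat) (mu : seq nat) : bool := all (fun x => 0 < x <= K)%N mu.

Definition Xi_determines (N K : nat) : Prop :=
  forall n (s : seq 'X_{1..N}) (c : 'X_{1..N} -> rat),
  {in s, forall m : 'X_{1..N}, wdeg m <= n}%N ->
  {in s, forall m : 'X_{1..N}, forall i : 'I_N, K <= i -> m i = 0}%N ->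
  (forall mu, parts_le K mu -> (sumn mu <= n)%N -> term_sum s c (Xi_point mu) = 0) ->
  {in s, forall m, c m = 0}.

Lemma Xi_determines0 N : Xi_determines N 0.
Proof.
move=> n s c _ s_vars s_vanish.
have s0 m : m \in s -> m = 0%MM.
  by move=> ms; apply/mnmP => i; rewrite mnm0E s_vars.
have := s_vanish [::] erefl (leq0n n); rewrite /term_sum.
rewrite (eq_big_seq (fun _ => c 0%MM)); last by move=> m /s0 ->; rewrite mmap11 mulr1.
rewrite big_const_seq count_predT iter_addr_0 => /eqP.
rewrite mulrn_eq0 => /orP[/eqP/size0nil -> //|/eqP c0 m /s0 ->//].
Qed.

Section Step.
Variables (N : nat) (k : 'I_N) (n : nat).
Variables (s : seq 'X_{1..N}) (c : 'X_{1..N} -> rat).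
Implicit Types m : 'X_{1..N}.
Hypothesis IH : Xi_determines N k.
Hypothesis s_wdeg : {in s, forall m, wdeg m <= n}%N.
Hypothesis s_vars : {in s, forall m, forall i : 'I_N, k < i -> m i = 0}%N.
Hypothesis s_vanish : forall mu, parts_le k.+1 mu -> (sumn mu <= n)%N ->
  term_sum s c (Xi_point mu) = 0.

Lemma s_wdeg_k m : m \in s -> (k.+1 * m k <= n)%N.
Proof. by move=> ms; have := wdeg_clear k m; have := s_wdeg ms; lia. Qed.

Lemma term_sum_Xi_cat_nseq t mu :
  term_sum s c (Xi_point (nseq t k.+1 ++ mu)) =
  \sum_(j < n.+1) term_sum (slice k s j) (slice_coef k c j) (Xi_point mu) *
                  (p_at_Xi mu k.+1 + (t * k.+1)%:R) ^+ j.
Proof.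
have s_le : {in s, forall m, m k <= n}%N by move=> m /s_wdeg_k; lia.
rewrite (term_sum_slices _ _ s_le); apply: eq_bigr => j _.
rewrite [Xi_point _ k]p_at_Xi_cat_nseq; congr (_ * _).
apply: term_sum_eq_low; first exact: slice_vars.
by move=> i ik; apply: p_at_Xi_cat_nseq_small.
Qed.

Lemma slice_top_coef0 J : {in s, forall m, (J < m k)%N -> c m = 0} ->
  {in s, forall m, m k = J -> c m = 0}.
Proof.
move=> above m ms mk.
have Jn : (k.+1 * J <= n)%N by rewrite -mk s_wdeg_k.
have -> : c m = slice_coef k c J (mnm_clear k m) by rewrite /slice_coef -mk mnm_clearK.
apply: (@IH (n - k.+1 * J)%N (slice k s J) (slice_coef k c J) _ _ _ (mnm_clear k m));
  last by rewrite /slice; apply/mapP; exists m; rewrite // mem_filter mk eqxx ms.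
- move=> _ /mapP[m' /[!mem_filter] /andP[/eqP m'k m's] ->].
  by have := wdeg_clear k m'; have := s_wdeg m's; rewrite m'k; lia.
- exact: slice_vars.
move=> mu mu_parts mu_size.
pose a j := term_sum (slice k s j) (slice_coef k c j) (Xi_point mu).
have a_above j : (J < j)%N -> a j = 0.
  move=> Jj; rewrite /a term_sum_slice big1_seq // => m' /andP[/eqP m'k m's].
  by rewrite above ?mul0r ?m'k.
apply: (coef_eq0_of_progression (a := a) (x := p_at_Xi mu k.+1) (d := k.+1%:R) _ _ (leqnn J)).
  by rewrite pnatr_eq0.
move=> t tJ; rewrite -natrM.
have mu_t_parts : parts_le k.+1 (nseq t k.+1 ++ mu).
  rewrite /parts_le all_cat all_nseq /= leqnn orbT /=.
  by apply: sub_all mu_parts => i /andP[-> /leqW].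
have mu_t_size : (sumn (nseq t k.+1 ++ mu) <= n)%N.
  rewrite sumn_cat sumn_nseq.
  have : (t * k.+1 <= J * k.+1)%N by rewrite leq_mul2r tJ orbT.
  by move: mu_size Jn; lia.
rewrite -[RHS](s_vanish mu_t_parts mu_t_size) term_sum_Xi_cat_nseq.
set y := p_at_Xi mu k.+1 + _.
rewrite (big_ord_widen n.+1 (fun j => a j * y ^+ j)); last by move: Jn; lia.
rewrite big_mkcond; apply: eq_bigr => j _.
by case: ltnP => // /a_above; rewrite /a => ->; rewrite mul0r.
Qed.

Lemma Xi_determinesS : {in s, forall m, c m = 0}.
Proof.
have coef0_above d : {in s, forall m, (n.+1 - d <= m k)%N -> c m = 0}.
  elim: d => [|d IHd] m ms; first by rewrite subn0 ltnNge; have := s_wdeg_k ms; lia.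
  move=> le_mk; case: (ltnP (m k) (n.+1 - d)) => [lt_mk|]; last exact: IHd.
  by apply: (slice_top_coef0 (J := m k)) => // m' m's lt'; apply: IHd => //; lia.
by move=> m ms; apply: (coef0_above n.+1); rewrite ?subnn.
Qed.

End Step.

Lemma Xi_determines_all N K : (K <= N)%N -> Xi_determines N K.
Proof.
elim: K => [_|K IHK KN]; first exact: Xi_determines0.
move=> n s c; exact: (Xi_determinesS (k := Ordinal KN) (IHK (ltnW KN))).
Qed.

Theorem proposition54 (N n : nat) (f g : {mpoly rat[N]}) :
  (0 < n)%N ->
  sym_deg_le n f -> sym_deg_le n g ->
  (forall mu : seq nat, is_partition mu -> (sumn mu <= n)%N ->
     eval_Xi f mu = eval_Xi g mu) ->
  f = g.
Proof.
move=> _ f_deg g_deg fg_Xi; apply/eqP; rewrite -subr_eq0; apply/eqP/mpolyP => m.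
rewrite mcoeff0; have [m_supp|] := boolP (m \in msupp (f - g)); last exact: memN_msupp_eq0.
apply: (Xi_determines_all (leqnn N) (n := n) (c := fun m => (f - g)@_m) _ _ _ m_supp).
- by move=> m' /msuppB_le; rewrite mem_cat => /orP[/f_deg|/g_deg].
- by move=> m' _ i; rewrite leqNgt ltn_ord.
move=> mu mu_parts mu_size.
have mu_part : is_partition mu by apply: sub_all mu_parts => i /andP[].
by rewrite /term_sum -mevalE mevalB [X in X - _]fg_Xi ?subrr.
Qed.
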